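(* Let $G$ be a connected graph of order $n(G)\ge 2$. The following statements are equivalent. (i) $\mu_t(G)=n(G)-\operatorname{diam}(G)+1$. (ii) There exists a diametral path $x_0,x_1,\dots,x_k$ in $G$ (that is, a shortest path with $k=\operatorname{diam}(G)$) such that for every pair $u,v$ of vertices of $G$ there exists a shortest $u,v$-path $u=y_0,y_1,\dots,y_{k'}=v$ with $\{y_1,\dots,y_{k'-1}\}\subseteq\{x_1,\dots,x_{k-1}\}$.
   Context: All graphs are finite, simple and undirected; $n(G)$ denotes the order of $G$ and $\operatorname{diam}(G)$ its diameter. Let $G$ be a connected graph and $X\subseteq V(G)$. Two vertices $x,y\in V(G)$ are $X$-visible if there exists a shortest $x,y$-path in $G$ none of whose internal vertices (i.e., vertices other than $x$ and $y$) belongs to $X$. The set $X$ is a total mutual-visibility set of $G$ if every two vertices of $G$ are $X$-visible (the empty set is allowed). The total mutual-visibility number $\mu_t(G)$ is the maximum cardinality of a total mutual-visibility set of $G$. *)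

(* A finite simple graph is a symmetric irreflexive relation
   g : rel T on a finType T (vertex set T). *)
From mathcomp Require Import all_boot.
Set Implicit Arguments. Unset Strict Implicit. Unset Printing Implicit Defensive.

Section Graph.
Variables (T : finType) (g : rel T).

Definition walk (x : T) (p : seq T) (y : T) : bool :=
  path g x p && (last x p == y).

Definition walk_of_len (x y : T) (k : nat) : bool :=
  [exists p : k.-tuple T, walk x p y].

(* distance: least length of an x,y-walk.  In a connected graph such a
   shortest walk has length < #|T|, so searching 0..#|T|-1 is exact. *)
Definition dist (x y : T) : nat := find (walk_of_len x y) (iota 0 #|T|).

Definition diam : nat := \max_(x : T) \max_(y : T) dist x y.

Definition internal (x : T) (p : seq T) : seq T := behead (belast x p).

Definition shortest_path (x : T) (p : seq T) (y : T) : bool :=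
  walk x p y && (size p == dist x y).

Definition visible (X : {set T}) (x y : T) : bool :=
  [exists p : (dist x y).-tuple T,
     walk x p y && all (fun v => v \notin X) (internal x p)].

Definition total_mutual_visibility_set (X : {set T}) : bool :=
  [forall x, forall y, visible X x y].

Definition mu_t : nat :=
  \max_(X : {set T} | total_mutual_visibility_set X) #|X|.

End Graph.

From mathcomp Require Import all_boot.
From mathcomp Require Import zify.
Set Implicit Arguments. Unset Strict Implicit. Unset Printing Implicit Defensive.

(* Let k = diam(G) >= 1.  The shortest path between two vertices at distance
   k has k - 1 internal vertices, which are distinct; if X is a total
   mutual-visibility set, these two vertices must see each other through a
   shortest path avoiding X internally, so X misses k - 1 vertices and
   mu_t(G) <= n - k + 1 (lemma [tmv_card_le]).  The complement of the
   internal vertices of a diametral path has exactly n - k + 1 elements, and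
   it is a total mutual-visibility set precisely when every pair of vertices
   is joined by a shortest path whose interior lies inside the interior of
   the diametral path (lemma [tmv_compl_internalP]).  Hence (ii) gives a set
   attaining the bound, and conversely a maximum total mutual-visibility set
   of size n - k + 1 is forced to be the complement of the interior of the
   shortest path witnessing the visibility of a diametral pair. *)

Section ShortestWalks.
Variables (T : finType) (g : rel T).
Hypothesis gconn : forall x y : T, connect g x y.

Lemma walk_shorten x p y : walk g x p y ->
  exists2 p', walk g x p' y & uniq (x :: p') /\ {subset x :: p' <= x :: p}.
Proof.
case/andP => pp /eqP <-; case: (shortenP pp) => p' pp' up' sub.
exists p'; first by rewrite /walk pp' eqxx.
by split=> // z; rewrite !inE => /orP [-> // | /sub ->]; rewrite orbT.
Qed.

(* Some length below #|T| admits an x,y-walk, since a walk without repeated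
   vertices has fewer than #|T| edges; so [dist] searches a range that is
   large enough. *)
Lemma has_walk_of_len x y : has (walk_of_len g x y) (iota 0 #|T|).
Proof.
have /connectP [p pp ->] := gconn x y.
have [p' w [u _]] := @walk_shorten x p (last x p) (introT andP (conj pp (eqxx _))).
apply/hasP; exists (size p'); last by apply/existsP; exists (in_tuple p').
rewrite mem_iota add0n /=.
by have := max_card (mem (x :: p')); rewrite (card_uniqP u) /=; lia.
Qed.

Lemma dist_lt_card x y : dist g x y < #|T|.
Proof. by have := has_walk_of_len x y; rewrite has_find size_iota. Qed.

Lemma dist_walk x y : exists2 p, walk g x p y & size p = dist g x y.
Proof.
have := nth_find 0 (has_walk_of_len x y).
rewrite -/(dist g x y) nth_iota ?dist_lt_card //.
by case/existsP => t w; exists t; rewrite ?size_tuple.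
Qed.

Lemma dist_min x p y : walk g x p y -> dist g x y <= size p.
Proof.
move=> w; rewrite leqNgt; apply/negP => lt.
have := before_find 0 lt; rewrite nth_iota ?add0n; last first.
  exact: ltn_trans lt (dist_lt_card x y).
by move/negbT/negP; apply; apply/existsP; exists (in_tuple p).
Qed.

Lemma shortest_walk_uniq x p y :
  walk g x p y -> size p = dist g x y -> uniq (x :: p).
Proof.
move=> w hs; have [p' w' [u' sub]] := walk_shorten w.
apply: leq_size_uniq u' sub _; rewrite /= ltnS hs.
exact: dist_min w'.
Qed.

End ShortestWalks.

Lemma card_internal (T : finType) (x : T) p :
  uniq (x :: p) -> #|[set z in internal x p]| = (size p).-1.
Proof.
move=> u; have ui : uniq (internal x p).
  move: u; rewrite lastI rcons_uniq /internal => /andP [_].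
  by case: (belast x p) => //= a s /andP [].
by rewrite cardsE (card_uniqP ui) /internal size_behead size_belast.
Qed.

Section Visibility.
Variables (T : finType) (g : rel T).
Hypothesis gconn : forall x y : T, connect g x y.

Lemma visibleP (X : {set T}) x y :
  reflect (exists p, [/\ walk g x p y, size p = dist g x y &
                         {subset internal x p <= ~: X}])
          (visible g X x y).
Proof.
apply: (iffP existsP) => [[t /andP [w /allP a]] | [p [w /eqP hs sub]]].
  by exists t; split; rewrite ?size_tuple // => z /a; rewrite in_setC.
by exists (Tuple hs); rewrite w; apply/allP => z /sub; rewrite in_setC.
Qed.

(* The interior of a shortest x,y-path lies outside a total mutual-visibility
   set X, whence #|X| + (dist x y - 1) <= n. *)
Lemma tmv_card_le (X : {set T}) x y : total_mutual_visibility_set g X ->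
  #|X| + (dist g x y).-1 <= #|T|.
Proof.
move/forallP/(_ x)/forallP/(_ y)/visibleP => [p [w hs sub]].
have sub' : [set z in internal x p] \subset ~: X.
  by apply/subsetP => z; rewrite inE => /sub.
have := subset_leq_card sub'.
rewrite card_internal ?hs ?(shortest_walk_uniq gconn w hs) //.
by have := cardsC X; lia.
Qed.

Lemma tmv_set0 : total_mutual_visibility_set g set0.
Proof.
apply/forallP => x; apply/forallP => y; apply/visibleP.
have [p w hs] := dist_walk gconn x y.
by exists p; split => // z _; rewrite setC0 inE.
Qed.

Lemma mu_t_attained : exists2 X, total_mutual_visibility_set g X & #|X| = mu_t g.
Proof.
case: (arg_maxnP (fun X : {set T} => #|X|) tmv_set0) => X hX hmax.
exists X => //; apply/eqP; rewrite eqn_leq.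
rewrite (@leq_bigmax_cond _ _ (fun X : {set T} => #|X|) _ hX) /=.
by apply/bigmax_leqP => Y /hmax.
Qed.

Lemma tmv_le_mu_t (X : {set T}) :
  total_mutual_visibility_set g X -> #|X| <= mu_t g.
Proof. exact: (@leq_bigmax_cond _ _ (fun X : {set T} => #|X|)). Qed.

Lemma tmv_compl_internalP (x : T) p :
  total_mutual_visibility_set g (~: [set z in internal x p]) <->
  forall u v : T, exists q : seq T,
    shortest_path g u q v /\ {subset internal u q <= internal x p}.
Proof.
split=> [hX u v | hq].
  have /visibleP [q [w hs sub]] := forallP (forallP hX u) v.
  exists q; split; first by rewrite /shortest_path w hs eqxx.
  by move=> z /sub; rewrite setCK inE.
apply/forallP => u; apply/forallP => v; apply/visibleP.
have [q [/andP [w /eqP hs] sub]] := hq u v.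
by exists q; split => // z /sub; rewrite setCK inE.
Qed.

End Visibility.

Section Diameter.
Variables (T : finType) (g : rel T).
Hypothesis gconn : forall x y : T, connect g x y.

Lemma dist_le_diam x y : dist g x y <= diam g.
Proof.
apply: leq_trans (leq_bigmax y) _.
exact: (@leq_bigmax _ (fun x => \max_(y : T) dist g x y) x).
Qed.

Lemma diametral_pair : 0 < #|T| -> exists x y, dist g x y = diam g.
Proof.
move=> h0; have [a ha] := eq_bigmax (fun x => \max_(y : T) dist g x y) h0.
have [b hb] := eq_bigmax (fun y => dist g a y) h0.
by exists a, b; rewrite /diam ha hb.
Qed.

Lemma diam_lt_card : 0 < #|T| -> diam g < #|T|.
Proof. by case/diametral_pair => x [y <-]; apply: dist_lt_card. Qed.

Lemma diam_gt0 : 1 < #|T| -> 0 < diam g.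
Proof.
case/card_gt1P => a [b [_ _ ab]]; apply: leq_trans (dist_le_diam a b).
have [[|c p] w hs] := dist_walk gconn a b; last by rewrite -hs.
by move: w ab; rewrite /walk /= => /eqP ->; rewrite eqxx.
Qed.

Lemma mu_t_le : 1 < #|T| -> mu_t g <= #|T| - diam g + 1.
Proof.
move=> hn; have [x [y hk]] := diametral_pair (ltnW hn).
have kpos := diam_gt0 hn.
by apply/bigmax_leqP => X /(tmv_card_le gconn x y); rewrite hk; lia.
Qed.

End Diameter.

Theorem proposition2p2 (T : finType) (g : rel T)
  (gsym : symmetric g) (girr : irreflexive g)
  (gconn : forall x y : T, connect g x y)
  (hn : 2 <= #|T|) :
  mu_t g = #|T| - diam g + 1 <->
  exists (x : T) (p : seq T),
    shortest_path g x p (last x p) /\ size p = diam g /\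
    forall u v : T, exists q : seq T,
      shortest_path g u q v /\ {subset internal u q <= internal x p}.
Proof.
have kpos := diam_gt0 gconn hn.
split=> [hmu | [x [p [/andP [w /eqP hs] [hk cover]]]]].
- (* A maximum set X and the shortest path p between a diametral pair that
     avoids X internally: the interior of p fills the complement of X. *)
  have [X hX hXc] := mu_t_attained gconn.
  have [x [y hxy]] := diametral_pair g (ltnW hn).
  have /(visibleP g) [p [w hs sub]] := forallP (forallP hX x) y.
  have u := shortest_walk_uniq gconn w hs.
  have hset : [set z in internal x p] = ~: X.
    apply/eqP; rewrite eqEcard card_internal // cardsCs setCK hs hxy hXc hmu.
    apply/andP; split; last by lia.
    by apply/subsetP => z; rewrite inE => /sub.
  exists x, p; split; last split.
  + by move: (w) => /andP [_ /eqP ->]; rewrite /shortest_path w hs eqxx.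
  + by rewrite hs.
  + by apply/(tmv_compl_internalP g); rewrite hset setCK.
- (* The complement of the interior of p has n - k + 1 elements and is a
     total mutual-visibility set, so it attains the upper bound. *)
  have hX := proj2 (tmv_compl_internalP g x p) cover.
  have := tmv_le_mu_t hX; have := mu_t_le gconn hn.
  rewrite cardsCs setCK card_internal ?hk ?(shortest_walk_uniq gconn w hs) //.
  by have := diam_lt_card gconn (ltnW hn); lia.
Qed.
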